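(* Assume $\mathcal G$ is strongly connected. Then there exists a constant $c\in(0,1)$ such that if for each agent $i$ the triggering times are generated recursively along the solution of system (S) by $t^i_1=0$ and either $$t^i_{k+1}=\max\Big\{\tau\ge t^i_k:\ |q_i(t^i_k)-q_i(t)|\le c\,|q_i(t)|\ \ \forall t\in[t^i_k,\tau]\Big\}$$ or $$t^i_{k+1}=\max\Big\{\tau\ge t^i_k:\ \frac{|q_i(t^i_k)|}{1+c}\le|q_i(t)|\le\frac{|q_i(t^i_k)|}{1-c}\ \ \forall t\in[t^i_k,\tau]\Big\},$$ then system (S) reaches consensus.
   Context: Let $\mathcal G$ be a weighted directed graph on agents $v_1,\dots,v_m$ with weighted adjacency matrix $\mathcal A=(a_{ij})$, $a_{ij}\ge0$, $a_{ii}=0$, where $a_{ij}>0$ iff there is a link from $v_j$ to $v_i$. Let $D=\mathrm{diag}(\sum_j a_{1j},\dots,\sum_j a_{mj})$ and $L=D-\mathcal A$. $\mathcal G$ is strongly connected if there is a directed path between any two distinct agents. System (S): $\dot x_i(t)=-\sum_{j=1}^m L_{ij}x_j(t^i_{k_i(t)})$, $i=1,\dots,m$, where $0=t^i_1<t^i_2<\cdots$ are agent $i$'s triggering times and $k_i(t)=\max\{k:t^i_k\le t\}$. Define $q_i(t)=-\sum_jL_{ij}x_j(t)$. Consensus means $x_i(t)-x_j(t)\to0$ as $t\to\infty$ for all $i,j$. *)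

From Stdlib Require Import Reals Lra.
Open Scope R_scope.

(* Agents are indexed by 0, ..., m-1 (agent v_{i+1} of the paper is index i).
   The weighted adjacency matrix is a : nat -> nat -> R, a i j = a_{ij},
   meaningful for i, j < m. *)

Fixpoint rsum (n : nat) (f : nat -> R) : R :=
  match n with
  | O => 0
  | S n' => rsum n' f + f n'
  end.

Definition Lap (a : nat -> nat -> R) (m : nat) (i j : nat) : R :=
  (if Nat.eqb i j then rsum m (fun k => a i k) else 0) - a i j.

Definition q (a : nat -> nat -> R) (m : nat) (x : nat -> R -> R) (i : nat) (t : R) : R :=
  - rsum m (fun j => Lap a m i j * x j t).

(* There is a link from v_u to v_v iff a v u > 0.
   reach a m u v : there is a directed path from u to v. *)
Inductive reach (a : nat -> nat -> R) (m : nat) : nat -> nat -> Prop :=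
  | reach_edge : forall u v, (u < m)%nat -> (v < m)%nat -> a v u > 0 -> reach a m u v
  | reach_step : forall u w v, reach a m u w -> (v < m)%nat -> a v w > 0 -> reach a m u v.

Definition strongly_connected (a : nat -> nat -> R) (m : nat) : Prop :=
  forall i j, (i < m)%nat -> (j < m)%nat -> i <> j -> reach a m i j.

(* If that set is unbounded (cond holds on all of [tk, +oo)) the max is +oo,
   encoded as None (no further triggering). *)
Definition next_trigger (cond : R -> Prop) (tk : R) (nxt : option R) : Prop :=
  match nxt with
  | Some s =>
      tk <= s /\ (forall t, tk <= t <= s -> cond t) /\
      (forall tau, tk <= tau -> (forall t, tk <= t <= tau -> cond t) -> tau <= s)
  | None => forall t, tk <= t -> cond t
  end.

Definition cond1 (a : nat -> nat -> R) (m : nat) (x : nat -> R -> R) (c : R)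
    (i : nat) (s t : R) : Prop :=
  Rabs (q a m x i s - q a m x i t) <= c * Rabs (q a m x i t).

Definition cond2 (a : nat -> nat -> R) (m : nat) (x : nat -> R -> R) (c : R)
    (i : nat) (s t : R) : Prop :=
  Rabs (q a m x i s) / (1 + c) <= Rabs (q a m x i t) <= Rabs (q a m x i s) / (1 - c).

(* tt i k = Some t^i_{k+1} (paper indexes from 1), None = no (k+1)-th trigger.
   rule i = true : agent i uses the first rule, false : the second. *)
Definition triggers_generated (a : nat -> nat -> R) (m : nat) (x : nat -> R -> R)
    (c : R) (rule : nat -> bool) (tt : nat -> nat -> option R) : Prop :=
  forall i, (i < m)%nat ->
    tt i O = Some 0 /\
    (forall k, tt i k = None -> tt i (S k) = None) /\
    (forall k s, tt i k = Some s ->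
       next_trigger (fun t => if rule i then cond1 a m x c i s t else cond2 a m x c i s t)
                    s (tt i (S k))).

(* The triggering sequences are well defined on [0,+oo): they do not
   accumulate, so that k_i(t) = max{k : t^i_k <= t} exists for every t >= 0. *)
Definition non_zeno (m : nat) (tt : nat -> nat -> option R) : Prop :=
  forall i T, (i < m)%nat ->
    exists k, tt i k = None \/ exists s, tt i k = Some s /\ T < s.

(* x solves (S) on [0,+oo): x_i continuous, and between two consecutive
   triggering times of agent i,  x_i' = -sum_j L_ij x_j(t^i_k) = q_i(t^i_k). *)
Definition solves_S (a : nat -> nat -> R) (m : nat) (x : nat -> R -> R)
    (tt : nat -> nat -> option R) : Prop :=
  (forall i t, (i < m)%nat -> 0 <= t -> continuity_pt (x i) t) /\
  (forall i k s t, (i < m)%nat -> tt i k = Some s -> s < t ->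
     match tt i (S k) with Some s' => t < s' | None => True end ->
     derivable_pt_lim (x i) t (q a m x i s)).

Definition consensus (m : nat) (x : nat -> R -> R) : Prop :=
  forall i j, (i < m)%nat -> (j < m)%nat ->
    forall eps, eps > 0 -> exists T, forall t, t >= T -> Rabs (x i t - x j t) < eps.

From Stdlib Require Import Reals Ranalysis5 Lra Lia Classical.
From Coquelicot Require Import Coquelicot.
Open Scope R_scope.

(* With [c = 1/2] both triggering rules keep the frozen slope [q_i(t^i_k)] of
   agent [i] within half of its current drive [q_i(t) = sum_j a_ij (x_j(t) - x_i(t))]:
   the first rule says so directly, the second because [q_i] cannot vanish, hence
   cannot change sign, between two triggers.  Such an approximate Laplacian flow
   never raises its maximum [M].  If agent [r] lies a gap [Z] below [M] at time
   [t0] and a path of length [k] leads from [r] to [v], comparison with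
   [g Z (t - t0)^k exp (-A (t - t0))] keeps [v] a fixed fraction of [Z] below [M].
   Applied to [x] and [- x] with [r = 0], this shrinks the spread [max - min] by a
   uniform factor over every unit time interval. *)

Lemma rsum_ext n f g : (forall k, (k < n)%nat -> f k = g k) -> rsum n f = rsum n g.
Proof.
  induction n as [|n IH]; intros H; simpl; [reflexivity|].
  rewrite IH, H; [reflexivity|lia|intros; apply H; lia].
Qed.

Lemma rsum_add n f g : rsum n (fun k => f k + g k) = rsum n f + rsum n g.
Proof. induction n as [|n IH]; simpl; [lra|]. rewrite IH; lra. Qed.

Lemma rsum_scal n c f : rsum n (fun k => c * f k) = c * rsum n f.
Proof. induction n as [|n IH]; simpl; [lra|]. rewrite IH; lra. Qed.

Lemma rsum_opp n f : rsum n (fun k => - f k) = - rsum n f.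
Proof. induction n as [|n IH]; simpl; [lra|]. rewrite IH; lra. Qed.

Lemma rsum_nonneg n f : (forall k, (k < n)%nat -> 0 <= f k) -> 0 <= rsum n f.
Proof.
  induction n as [|n IH]; intros H; simpl; [lra|].
  assert (0 <= f n) by (apply H; lia).
  assert (0 <= rsum n f) by (apply IH; intros; apply H; lia).
  lra.
Qed.

Lemma rsum_ge_term n f w :
  (forall k, (k < n)%nat -> 0 <= f k) -> (w < n)%nat -> f w <= rsum n f.
Proof.
  induction n as [|n IH]; intros H Hw; simpl; [lia|].
  assert (0 <= rsum n f) by (apply rsum_nonneg; intros; apply H; lia).
  assert (0 <= f n) by (apply H; lia).
  destruct (Nat.eq_dec w n) as [->|Hne]; [lra|].
  assert (f w <= rsum n f) by (apply IH; [intros; apply H|]; lia).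
  lra.
Qed.

Lemma rsum_delta n i c :
  (i < n)%nat -> rsum n (fun j => if Nat.eqb i j then c else 0) = c.
Proof.
  induction n as [|n IH]; intros Hi; simpl; [lia|].
  destruct (Nat.eqb_spec i n) as [->|Hne].
  - rewrite (rsum_ext n _ (fun _ => 0)).
    + clear. induction n as [|n IH]; simpl; lra.
    + intros k Hk. destruct (Nat.eqb_spec n k); [lia|reflexivity].
  - rewrite IH by lia. lra.
Qed.

Definition drive (a : nat -> nat -> R) (m : nat) (y : nat -> R -> R) (i : nat) (t : R) : R :=
  rsum m (fun k => a i k * (y k t - y i t)).

Lemma q_eq_drive a m x i t : (i < m)%nat -> q a m x i t = drive a m x i t.
Proof.
  intros Hi. unfold q, Lap, drive.
  rewrite (rsum_ext m _ (fun j => (if Nat.eqb i j then rsum m (fun k => a i k) * x i t else 0)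
                                   + - (a i j * x j t))).
  2:{ intros j _. destruct (Nat.eqb_spec i j) as [->|_]; ring. }
  rewrite rsum_add, rsum_delta, rsum_opp by exact Hi.
  rewrite (rsum_ext m (fun k => a i k * (x k t - x i t))
             (fun k => a i k * x k t + - (x i t * a i k))) by (intros; ring).
  rewrite rsum_add, rsum_opp, rsum_scal.
  change (rsum m (a i)) with (rsum m (fun k => a i k)). ring.
Qed.

Lemma drive_opp a m y j u : drive a m (fun k t => - y k t) j u = - drive a m y j u.
Proof. unfold drive. rewrite <- rsum_opp. apply rsum_ext. intros; ring. Qed.

Lemma drive_eq_gaps a m y v u M :
  drive a m y v u =
  rsum m (fun k => a v k) * (M - y v u) - rsum m (fun k => a v k * (M - y k u)).
Proof.
  unfold drive.
  rewrite (rsum_ext m _ (fun k => (M - y v u) * a v k + - (a v k * (M - y k u))))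
    by (intros; ring).
  rewrite rsum_add, rsum_opp, rsum_scal.
  change (rsum m (a v)) with (rsum m (fun k => a v k)). ring.
Qed.

Lemma drive_nonpos_at_max a m y j t :
  (forall k, (k < m)%nat -> 0 <= a j k) ->
  (forall k, (k < m)%nat -> y k t <= y j t) -> drive a m y j t <= 0.
Proof.
  intros Ha Hy. unfold drive.
  assert (Hneg : 0 <= rsum m (fun k => - (a j k * (y k t - y j t)))).
  { apply rsum_nonneg. intros k Hk.
    assert (0 <= a j k * (y j t - y k t)).
    { apply Rmult_le_pos; [apply Ha; exact Hk|]. specialize (Hy k Hk). lra. }
    lra. }
  rewrite rsum_opp in Hneg. lra.
Qed.

Lemma continuity_pt_rsum n (F : nat -> R -> R) t :
  (forall k, (k < n)%nat -> continuity_pt (F k) t) ->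
  continuity_pt (fun u => rsum n (fun k => F k u)) t.
Proof.
  induction n as [|n IH]; intros H; simpl.
  - apply continuity_pt_const. intros ? ?; reflexivity.
  - apply (continuity_pt_plus (fun u => rsum n (fun k => F k u)) (F n)).
    + apply IH. intros; apply H; lia.
    + apply H; lia.
Qed.

Lemma continuity_pt_drive a m y i t : (i < m)%nat ->
  (forall k, (k < m)%nat -> continuity_pt (y k) t) -> continuity_pt (drive a m y i) t.
Proof.
  intros Hi H. apply (continuity_pt_rsum m (fun k u => a i k * (y k u - y i u))).
  intros k Hk. apply (continuity_pt_mult (fun _ => a i k) (fun u => y k u - y i u)).
  - apply continuity_pt_const. intros ? ?; reflexivity.
  - apply (continuity_pt_minus (y k) (y i)); auto.
Qed.

Lemma continuity_pt_q a m x i t : (i < m)%nat ->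
  (forall k, (k < m)%nat -> continuity_pt (x k) t) -> continuity_pt (q a m x i) t.
Proof.
  intros Hi H. apply continuity_pt_ext with (drive a m x i).
  - intros u. symmetry. apply q_eq_drive, Hi.
  - apply continuity_pt_drive; assumption.
Qed.

Lemma continuity_pt_eps f x : continuity_pt f x ->
  forall e, 0 < e -> exists d, 0 < d /\ forall u, Rabs (u - x) < d -> Rabs (f u - f x) < e.
Proof.
  intros H e He. destruct (H e He) as [d [Hd Hf]]. exists d. split; [exact Hd|].
  intros u Hu. destruct (Req_dec u x) as [->|Hne].
  - rewrite Rminus_diag, Rabs_R0. exact He.
  - apply Hf. split; [split; [exact I|auto]|exact Hu].
Qed.

Lemma continuity_pt_of_derivable f t l : derivable_pt_lim f t l -> continuity_pt f t.
Proof. intros H. exact (derivable_continuous_pt f t (exist _ l H)). Qed.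

Lemma continuity_pt_const_minus (y : R -> R) M t :
  continuity_pt y t -> continuity_pt (fun s => M - y s) t.
Proof.
  intros H. apply (continuity_pt_minus (fun _ => M) y); [|exact H].
  apply continuity_pt_const. intros ? ?; reflexivity.
Qed.

Lemma pos_near_family n (f : nat -> R -> R) t :
  (forall k, (k < n)%nat -> continuity_pt (f k) t) ->
  (forall k, (k < n)%nat -> 0 < f k t) ->
  exists eta, 0 < eta /\ forall k u, (k < n)%nat -> Rabs (u - t) < eta -> 0 < f k u.
Proof.
  induction n as [|n IH]; intros Hc Hp.
  - exists 1. split; [lra|]. intros; lia.
  - destruct IH as [e1 [He1 H1]]; [intros; apply Hc; lia|intros; apply Hp; lia|].
    assert (Hn : 0 < f n t) by (apply Hp; lia).
    destruct (continuity_pt_eps (f n) t (Hc n ltac:(lia)) (f n t) Hn) as [e2 [He2 H2]].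
    exists (Rmin e1 e2). split; [apply Rmin_pos; assumption|].
    pose proof (Rmin_l e1 e2). pose proof (Rmin_r e1 e2).
    intros k u Hk Hu. destruct (Nat.eq_dec k n) as [->|Hne].
    + assert (Hd := H2 u ltac:(lra)). apply Rabs_def2 in Hd. lra.
    + apply H1; [lia|lra].
Qed.

Lemma le_of_derive_nonneg f a b : a <= b ->
  (forall u, a <= u <= b -> continuity_pt f u) ->
  (forall u, a < u < b -> exists p, derivable_pt_lim f u p /\ 0 <= p) ->
  f a <= f b.
Proof.
  intros Hab Hc Hd.
  assert (HD : forall u, a < u < b -> is_derive f u (Derive f u) /\ 0 <= Derive f u).
  { intros u Hu. destruct (Hd u Hu) as [p [Hp Hp0]]. apply is_derive_Reals in Hp.
    rewrite (is_derive_unique f u p Hp). split; assumption. }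
  set (df := fun u => if Rlt_dec a u then if Rlt_dec u b then Derive f u else 0 else 0).
  pose proof (MVT_gen f a b df) as HM. simpl in HM.
  rewrite Rmin_left, Rmax_right in HM by lra.
  destruct HM as [c [Hcab Heq]].
  - intros u Hu. unfold df.
    destruct (Rlt_dec a u); [|lra]. destruct (Rlt_dec u b); [|lra]. apply HD, Hu.
  - exact Hc.
  - assert (0 <= df c).
    { unfold df. destruct (Rlt_dec a c); [|lra]. destruct (Rlt_dec c b); [|lra].
      apply HD. lra. }
    assert (0 <= df c * (b - a)) by (apply Rmult_le_pos; lra).
    lra.
Qed.

Lemma nonneg_of_pos_before f a0 ts : a0 < ts -> continuity_pt f ts ->
  (forall s, a0 <= s < ts -> 0 < f s) -> 0 <= f ts.
Proof.
  intros Hts Hc Hpos. apply Rnot_lt_le. intros Hneg.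
  destruct (continuity_pt_eps f ts Hc (- f ts) ltac:(lra)) as [d [Hd Hf]].
  set (u := ts - Rmin d (ts - a0) / 2).
  pose proof (Rmin_l d (ts - a0)). pose proof (Rmin_r d (ts - a0)).
  assert (0 < Rmin d (ts - a0)) by (apply Rmin_pos; lra).
  assert (Hu : 0 < f u) by (apply Hpos; unfold u; lra).
  assert (Hclose : Rabs (u - ts) < d) by (unfold u; rewrite Rabs_left; lra).
  specialize (Hf u Hclose). apply Rabs_def2 in Hf. lra.
Qed.

Lemma first_zero_time n (f : nat -> R -> R) a0 j1 t1 :
  (forall j t, (j < n)%nat -> a0 <= t -> continuity_pt (f j) t) ->
  (forall j, (j < n)%nat -> 0 < f j a0) ->
  (j1 < n)%nat -> a0 <= t1 -> f j1 t1 <= 0 ->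
  exists j ts, (j < n)%nat /\ a0 < ts /\ f j ts = 0 /\
    (forall k s, (k < n)%nat -> a0 <= s < ts -> 0 < f k s) /\
    (forall k, (k < n)%nat -> 0 <= f k ts).
Proof.
  intros Hc H0 Hj1 Ht1 Hbad.
  set (E := fun s => a0 <= s <= t1 /\ forall k r, (k < n)%nat -> a0 <= r <= s -> 0 < f k r).
  assert (HEa0 : E a0).
  { split; [lra|]. intros k r Hk Hr. replace r with a0 by lra. auto. }
  assert (HEb : bound E) by (exists t1; intros s [Hs _]; lra).
  destruct (completeness E HEb (ex_intro _ a0 HEa0)) as [ts [Hub Hlub]].
  assert (Hts0 : a0 <= ts) by (apply Hub; exact HEa0).
  assert (Hts1 : ts <= t1) by (apply Hlub; intros s [Hs _]; lra).
  assert (Hbefore : forall k s, (k < n)%nat -> a0 <= s < ts -> 0 < f k s).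
  { intros k s Hk Hs. apply NNPP. intros Hnot.
    assert (ts <= s); [|lra].
    apply Hlub. intros e [He1 He2]. apply Rnot_lt_le. intros Hse.
    apply Hnot, He2; [exact Hk|lra]. }
  assert (Hat : forall k, (k < n)%nat -> 0 <= f k ts).
  { intros k Hk. destruct (Req_dec ts a0) as [->|Hne]; [left; auto|].
    apply (nonneg_of_pos_before (f k) a0); [lra|apply Hc; assumption|].
    intros; apply Hbefore; assumption. }
  destruct (classic (exists j, (j < n)%nat /\ f j ts <= 0)) as [[j [Hj Hfj]]|Hall].
  - exists j, ts. assert (Hz : f j ts = 0) by (specialize (Hat j Hj); lra).
    repeat split; try assumption.
    destruct (Req_dec ts a0) as [->|]; [specialize (H0 j Hj); lra|lra].
  - exfalso.
    assert (Hpos : forall k, (k < n)%nat -> 0 < f k ts).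
    { intros k Hk. apply Rnot_le_lt. intros Hle. apply Hall. eauto. }
    destruct (Req_dec ts t1) as [->|Hne]; [specialize (Hpos j1 Hj1); lra|].
    destruct (pos_near_family n f ts (fun k Hk => Hc k ts Hk Hts0) Hpos) as [eta [Heta Hf]].
    pose proof (Rmin_l (ts + eta / 2) t1). pose proof (Rmin_r (ts + eta / 2) t1).
    assert (ts < Rmin (ts + eta / 2) t1) by (apply Rmin_glb_lt; lra).
    set (e := Rmin (ts + eta / 2) t1) in *.
    assert (HE : E e).
    { split; [split; lra|]. intros k r Hk Hr. destruct (Rlt_dec r ts).
      - apply Hbefore; [exact Hk|lra].
      - apply Hf; [exact Hk|]. rewrite Rabs_right; lra. }
    specialize (Hub e HE). lra.
Qed.

Lemma positivity_barrier n (f : nat -> R -> R) a0 :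
  (forall j t, (j < n)%nat -> a0 <= t -> continuity_pt (f j) t) ->
  (forall j, (j < n)%nat -> 0 < f j a0) ->
  (forall j t, (j < n)%nat -> a0 < t -> f j t = 0 ->
     (forall k s, (k < n)%nat -> a0 <= s < t -> 0 < f k s) ->
     (forall k, (k < n)%nat -> 0 <= f k t) ->
     exists d, 0 < d /\
       forall u, t - d < u < t -> exists p, derivable_pt_lim (f j) u p /\ 0 <= p) ->
  forall j t, (j < n)%nat -> a0 <= t -> 0 < f j t.
Proof.
  intros Hc H0 Hloc j1 t1 Hj1 Ht1. apply Rnot_le_lt. intros Hbad.
  destruct (first_zero_time n f a0 j1 t1 Hc H0 Hj1 Ht1 Hbad)
    as [j [ts [Hj [Hts [Hz [Hbefore Hat]]]]]].
  destruct (Hloc j ts Hj Hts Hz Hbefore Hat) as [d [Hd Hder]].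
  set (u := ts - Rmin d (ts - a0) / 2).
  pose proof (Rmin_l d (ts - a0)). pose proof (Rmin_r d (ts - a0)).
  assert (0 < Rmin d (ts - a0)) by (apply Rmin_pos; lra).
  assert (Hu : 0 < f j u) by (apply Hbefore; [exact Hj|unfold u; lra]).
  assert (f j u <= f j ts); [|lra].
  apply le_of_derive_nonneg; [unfold u; lra| |].
  - intros s Hs. apply Hc; [exact Hj|unfold u in Hs; lra].
  - intros s Hs. apply Hder. unfold u in Hs; lra.
Qed.

Lemma comparison_lower (z b b' : R -> R) t0 A : 0 <= A ->
  (forall t, t0 <= t -> continuity_pt z t) ->
  (forall u, is_derive b u (b' u)) -> b t0 <= z t0 ->
  (forall t, t0 < t -> exists d, 0 < d /\ exists p, forall u, t - d < u < t ->
      derivable_pt_lim z u p /\ b' u - A * (z u - b u) <= p) ->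
  forall t, t0 <= t -> b t <= z t.
Proof.
  intros HA Hz Hb Hb0 Hloc t Ht. apply Rnot_lt_le. intros Hbad.
  set (eps := (b t - z t) / 2).
  set (f := fun s => z s - b s + eps).
  assert (Hcf : forall s, t0 <= s -> continuity_pt f s).
  { intros s Hs. apply (continuity_pt_plus (fun s => z s - b s) (fun _ => eps)).
    - apply (continuity_pt_minus z b); [apply Hz, Hs|].
      apply (continuity_pt_of_derivable b s (b' s)), is_derive_Reals, Hb.
    - apply continuity_pt_const. intros ? ?; reflexivity. }
  assert (0 < f t); [|unfold f, eps in *; lra].
  apply (positivity_barrier 1 (fun _ => f) t0) with (j := O); try lia; try lra.
  - intros _ s _ Hs. apply Hcf, Hs.
  - intros _ _. unfold f, eps. lra.
  - intros _ ts _ Hts Hzero _ _.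
    destruct (continuity_pt_eps f ts (Hcf ts ltac:(lra)) eps ltac:(unfold eps; lra))
      as [d1 [Hd1 Hf1]].
    destruct (Hloc ts Hts) as [d [Hd [p Hp]]].
    exists (Rmin d d1). split; [apply Rmin_pos; assumption|].
    pose proof (Rmin_l d d1). pose proof (Rmin_r d d1).
    intros u Hu. exists (p - b' u). destruct (Hp u ltac:(lra)) as [Hder Hge]. split.
    + apply is_derive_Reals. unfold f.
      replace (p - b' u) with (p - b' u + 0) by ring.
      apply (is_derive_plus (fun s => z s - b s) (fun _ => eps)).
      * apply (is_derive_minus z b); [apply is_derive_Reals, Hder|apply Hb].
      * apply (is_derive_const eps).
    + assert (Hclose : Rabs (u - ts) < d1) by (rewrite Rabs_left; lra).
      specialize (Hf1 u Hclose). rewrite Hzero in Hf1. apply Rabs_def2 in Hf1.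
      unfold f in Hf1.
      assert (0 <= A * (b u - z u)) by (apply Rmult_le_pos; lra).
      lra.
Qed.

Lemma common_positive_rate (P : nat -> R -> Prop) n :
  (forall v r r', P v r -> 0 < r' <= r -> P v r') ->
  (forall v, (v < n)%nat -> exists r, 0 < r /\ P v r) ->
  exists r, 0 < r <= 1 /\ forall v, (v < n)%nat -> P v r.
Proof.
  intros Hmono. induction n as [|n IH]; intros Hex.
  - exists 1. split; [lra|]. intros; lia.
  - destruct IH as [r1 [Hr1 H1]]; [intros; apply Hex; lia|].
    destruct (Hex n ltac:(lia)) as [r2 [Hr2 H2]].
    pose proof (Rmin_l r1 r2). pose proof (Rmin_r r1 r2).
    assert (0 < Rmin r1 r2) by (apply Rmin_pos; lra).
    exists (Rmin r1 r2). split; [lra|].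
    intros v Hv. destruct (Nat.eq_dec v n) as [->|Hne].
    + apply Hmono with r2; [exact H2|lra].
    + apply Hmono with r1; [apply H1; lia|lra].
Qed.

(* [max_upto 0 f] is the junk value [f 0]; all uses have [0 < n]. *)
Fixpoint max_upto (n : nat) (f : nat -> R) : R :=
  match n with
  | O => f O
  | S n' => Rmax (max_upto n' f) (f n')
  end.

Definition min_upto (n : nat) (f : nat -> R) : R := - max_upto n (fun k => - f k).

Lemma le_max_upto n f k : (k < n)%nat -> f k <= max_upto n f.
Proof.
  induction n as [|n IH]; intros Hk; simpl; [lia|].
  destruct (Nat.eq_dec k n) as [->|Hne]; [apply Rmax_r|].
  eapply Rle_trans; [apply IH; lia|apply Rmax_l].
Qed.

Lemma max_upto_le n f B : (0 < n)%nat ->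
  (forall k, (k < n)%nat -> f k <= B) -> max_upto n f <= B.
Proof.
  induction n as [|n IH]; intros Hn H; simpl; [lia|].
  destruct n as [|n].
  - simpl. apply Rmax_lub; apply H; lia.
  - apply Rmax_lub; [apply IH; [lia|intros; apply H; lia]|apply H; lia].
Qed.

Lemma min_upto_le n f k : (k < n)%nat -> min_upto n f <= f k.
Proof.
  intros Hk. unfold min_upto.
  assert (- f k <= max_upto n (fun k => - f k)) by exact (le_max_upto n (fun k => - f k) k Hk).
  lra.
Qed.

Lemma abs_sub_le_max_min n f i j : (i < n)%nat -> (j < n)%nat ->
  Rabs (f i - f j) <= max_upto n f - min_upto n f.
Proof.
  intros Hi Hj.
  pose proof (le_max_upto n f i Hi). pose proof (le_max_upto n f j Hj).
  pose proof (min_upto_le n f i Hi). pose proof (min_upto_le n f j Hj).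
  apply Rabs_le. lra.
Qed.

Definition near_rate (p r : R) : Prop := Rabs (p - r) <= Rabs r / 2.

Lemma near_rate_upper p r : near_rate p r ->
  (0 <= r -> p <= 3 * r / 2) /\ (r <= 0 -> p <= r / 2).
Proof.
  unfold near_rate. intros H. apply Rabs_le_between in H.
  split; intros Hr; [rewrite Rabs_right in H by lra|rewrite Rabs_left1 in H by lra]; lra.
Qed.

Lemma near_rate_opp p r : near_rate p r -> near_rate (- p) (- r).
Proof.
  unfold near_rate. intros H.
  replace (- p - - r) with (- (p - r)) by ring. rewrite !Rabs_Ropp. exact H.
Qed.

Section ApproximateFlow.

Variable a : nat -> nat -> R.
Variable m : nat.
Hypothesis a_nonneg : forall i j, (i < m)%nat -> (j < m)%nat -> 0 <= a i j.

(* Slopes are only prescribed on left neighbourhoods (s, t) of each time t: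
   at a triggering time the slope of an agent jumps. *)
Definition approx_flow (y : nat -> R -> R) : Prop :=
  (forall k t, (k < m)%nat -> 0 <= t -> continuity_pt (y k) t) /\
  (forall j t, (j < m)%nat -> 0 < t -> exists s p, 0 <= s < t /\
     forall u, s < u < t -> derivable_pt_lim (y j) u p /\ near_rate p (drive a m y j u)).

Lemma approx_flow_opp y : approx_flow y -> approx_flow (fun k t => - y k t).
Proof.
  intros [Hc Hd]. split.
  - intros k t Hk Ht. apply (continuity_pt_opp (y k)), Hc; assumption.
  - intros j t Hj Ht. destruct (Hd j t Hj Ht) as [s [p [Hs Hu]]].
    exists s, (- p). split; [exact Hs|]. intros u Hsu.
    destruct (Hu u Hsu) as [Hder Hnear]. split.
    + apply is_derive_Reals, (is_derive_opp (y j)), is_derive_Reals, Hder.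
    + rewrite drive_opp. apply near_rate_opp, Hnear.
Qed.

Lemma approx_flow_upper_invariant y t0 M : approx_flow y -> 0 <= t0 ->
  (forall k, (k < m)%nat -> y k t0 <= M) ->
  forall k t, (k < m)%nat -> t0 <= t -> y k t <= M.
Proof.
  intros [Hc Hd] Ht0 HM k t Hk Ht. apply Rnot_lt_le. intros Hbad.
  set (eps := (y k t - M) / (2 * (1 + t - t0))).
  assert (Heps : 0 < eps) by (apply Rdiv_lt_0_compat; lra).
  (* The slack [eps (1 + s - t0)] makes the barrier strict: where an agent
     touches it the drive is <= 0, so the slope stays below [eps]. *)
  assert (0 < M + eps * (1 + t - t0) - y k t).
  { refine (positivity_barrier m (fun j s => M + eps * (1 + s - t0) - y j s) t0
            _ _ _ k t Hk Ht).
    - intros j s Hj Hs.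
      apply (continuity_pt_minus (fun s => M + eps * (1 + s - t0)) (y j));
        [|apply Hc; [exact Hj|lra]].
      apply (continuity_pt_of_derivable _ s eps), is_derive_Reals.
      auto_derive; [exact I|ring].
    - intros j Hj. specialize (HM j Hj). nra.
    - intros j ts Hj Hts Hz _ Hat.
      assert (HQ : drive a m y j ts <= 0).
      { apply drive_nonpos_at_max; [intros; apply a_nonneg; assumption|].
        intros i Hi. specialize (Hat i Hi). lra. }
      assert (HcQ : continuity_pt (drive a m y j) ts).
      { apply continuity_pt_drive; [exact Hj|]. intros i Hi. apply Hc; [exact Hi|lra]. }
      destruct (continuity_pt_eps _ _ HcQ (eps / 2) ltac:(lra)) as [d1 [Hd1 HQd]].
      destruct (Hd j ts Hj ltac:(lra)) as [s [p [Hs Hseg]]].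
      pose proof (Rmin_l d1 (ts - s)). pose proof (Rmin_r d1 (ts - s)).
      exists (Rmin d1 (ts - s)). split; [apply Rmin_pos; lra|].
      intros u Hu. destruct (Hseg u ltac:(lra)) as [Hder Hnear].
      exists (eps - p). split.
      + apply is_derive_Reals.
        apply (is_derive_minus (fun s => M + eps * (1 + s - t0)) (y j) u eps p).
        * auto_derive; [exact I|ring].
        * apply is_derive_Reals, Hder.
      + assert (Hclose : Rabs (u - ts) < d1) by (rewrite Rabs_left; lra).
        specialize (HQd u Hclose). apply Rabs_def2 in HQd.
        destruct (near_rate_upper _ _ Hnear) as [Hup1 Hup2].
        destruct (Rle_dec 0 (drive a m y j u)) as [Hpos|Hneg];
          [specialize (Hup1 Hpos)|specialize (Hup2 ltac:(lra))]; lra. }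
  assert (eps * (1 + t - t0) = (y k t - M) / 2) by (unfold eps; field; lra).
  lra.
Qed.

(* [3/2] bounds the ratio between a frozen slope and the drive, see [near_rate_upper]. *)
Definition rate_bound : R := 3 / 2 * (1 + rsum m (fun v => rsum m (fun k => a v k))).

Lemma rate_bound_pos : 0 < rate_bound.
Proof.
  unfold rate_bound.
  assert (0 <= rsum m (fun v => rsum m (fun k => a v k))).
  { apply rsum_nonneg. intros v Hv. apply rsum_nonneg. intros; apply a_nonneg; assumption. }
  lra.
Qed.

Lemma rate_bound_ge v : (v < m)%nat -> 3 / 2 * rsum m (fun k => a v k) <= rate_bound.
Proof.
  intros Hv. unfold rate_bound.
  assert (rsum m (fun k => a v k) <= rsum m (fun v => rsum m (fun k => a v k))); [|lra].
  apply (rsum_ge_term m (fun v => rsum m (fun k => a v k))); [|exact Hv].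
  intros; apply rsum_nonneg; intros; apply a_nonneg; assumption.
Qed.

Lemma gap_slope_lower y t0 M v t : approx_flow y -> 0 <= t0 ->
  (forall i, (i < m)%nat -> y i t0 <= M) -> (v < m)%nat -> t0 < t ->
  exists d, 0 < d /\ exists p, forall u, t - d < u < t -> t0 < u /\
    derivable_pt_lim (fun s => M - y v s) u p /\
    - rate_bound * (M - y v u) <= p /\
    forall w, (w < m)%nat -> a v w * (M - y w u) / 2 - rate_bound * (M - y v u) <= p.
Proof.
  intros Hy Ht0 HM Hv Ht.
  pose proof (approx_flow_upper_invariant y t0 M Hy Ht0 HM) as Hinv.
  destruct Hy as [_ Hd]. destruct (Hd v t Hv ltac:(lra)) as [s [p [Hs Hseg]]].
  pose proof (Rmin_l (t - s) (t - t0)). pose proof (Rmin_r (t - s) (t - t0)).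
  exists (Rmin (t - s) (t - t0)). split; [apply Rmin_pos; lra|].
  exists (- p). intros u Hu. destruct (Hseg u ltac:(lra)) as [Hder Hnear].
  split; [lra|]. split.
  { apply is_derive_Reals. replace (- p) with (0 - p) by ring.
    apply (is_derive_minus (fun _ => M) (y v) u 0 p);
      [apply (is_derive_const M)|apply is_derive_Reals, Hder]. }
  rewrite (drive_eq_gaps a m y v u M) in Hnear.
  set (Z := M - y v u) in *. set (W := rsum m (fun k => a v k * (M - y k u))) in *.
  set (D := rsum m (fun k => a v k)) in *.
  assert (Hgap : forall k, (k < m)%nat -> 0 <= a v k * (M - y k u)).
  { intros k Hk. apply Rmult_le_pos; [apply a_nonneg; assumption|].
    assert (y k u <= M) by (apply Hinv; [assumption|lra]). lra. }
  assert (HZ : 0 <= Z) by (assert (y v u <= M) by (apply Hinv; [assumption|lra]); unfold Z; lra).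
  assert (HW : 0 <= W) by (apply rsum_nonneg, Hgap).
  assert (HD : 0 <= D) by (apply rsum_nonneg; intros; apply a_nonneg; assumption).
  assert (0 <= D * Z) by (apply Rmult_le_pos; assumption).
  assert (3 / 2 * D * Z <= rate_bound * Z).
  { apply Rmult_le_compat_r; [|apply rate_bound_ge]; assumption. }
  assert (Hp : W / 2 - rate_bound * Z <= - p).
  { destruct (near_rate_upper _ _ Hnear) as [Hup1 Hup2].
    destruct (Rle_dec 0 (D * Z - W)) as [Hpos|Hneg];
      [specialize (Hup1 Hpos)|specialize (Hup2 ltac:(lra))]; lra. }
  split; [lra|]. intros w Hw.
  assert (a v w * (M - y w u) <= W) by (apply (rsum_ge_term m _ w Hgap Hw)).
  lra.
Qed.

Definition gap_lower_bound (r v : nat) (g : R) (k : nat) : Prop :=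
  forall y t0 M, approx_flow y -> 0 <= t0 -> (forall i, (i < m)%nat -> y i t0 <= M) ->
  forall t, t0 <= t ->
    g * (M - y r t0) * (t - t0) ^ k * exp (- rate_bound * (t - t0)) <= M - y v t.

Lemma gap_lower_bound_refl r : (r < m)%nat -> gap_lower_bound r r 1 0.
Proof.
  intros Hr y t0 M Hy Ht0 HM t Ht. set (A := rate_bound).
  replace (1 * (M - y r t0) * (t - t0) ^ 0 * exp (- A * (t - t0)))
    with ((M - y r t0) * exp (- A * (t - t0))) by (simpl; ring).
  apply (comparison_lower (fun s => M - y r s) (fun s => (M - y r t0) * exp (- A * (s - t0)))
           (fun s => - A * ((M - y r t0) * exp (- A * (s - t0)))) t0 A);
    [left; apply rate_bound_pos| | | | |exact Ht].
  - intros s Hs. apply continuity_pt_const_minus, (proj1 Hy); [exact Hr|lra].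
  - intros u. auto_derive; [exact I|]. unfold Rminus. ring.
  - rewrite Rminus_diag, Rmult_0_r, exp_0. lra.
  - intros ts Hts.
    destruct (gap_slope_lower y t0 M r ts Hy Ht0 HM Hr Hts) as [d [Hd [p Hp]]].
    exists d. split; [exact Hd|]. exists p. intros u Hu.
    destruct (Hp u Hu) as [_ [Hder [Hge _]]]. split; [exact Hder|]. fold A in Hge. lra.
Qed.

Lemma gap_lower_bound_edge r w v g k : gap_lower_bound r w g k ->
  (w < m)%nat -> (v < m)%nat ->
  gap_lower_bound r v (g * a v w / (2 * INR (S k))) (S k).
Proof.
  intros Hb Hw Hv y t0 M Hy Ht0 HM t Ht.
  set (A := rate_bound). set (g' := g * a v w / (2 * INR (S k))). set (Z := M - y r t0).
  assert (HSk : 0 < INR (S k)) by (apply lt_0_INR; lia).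
  assert (Hg' : g' * INR (S k) = g * a v w / 2) by (unfold g'; field; lra).
  apply (comparison_lower (fun s => M - y v s)
           (fun s => g' * Z * (s - t0) ^ S k * exp (- A * (s - t0)))
           (fun s => g' * Z * (INR (S k) * (s - t0) ^ k - A * (s - t0) ^ S k)
                     * exp (- A * (s - t0))) t0 A);
    [left; apply rate_bound_pos| | | | |exact Ht].
  - intros s Hs. apply continuity_pt_const_minus, (proj1 Hy); [exact Hv|lra].
  - intros u. auto_derive; [exact I|].
    change (match k with O => 1 | S _ => INR k + 1 end) with (INR (S k)).
    simpl pow. unfold Rminus. ring.
  - rewrite Rminus_diag, pow_i by lia. assert (y v t0 <= M) by (apply HM, Hv). lra.
  - intros ts Hts.
    destruct (gap_slope_lower y t0 M v ts Hy Ht0 HM Hv Hts) as [d [Hd [p Hp]]].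
    exists d. split; [exact Hd|]. exists p. intros u Hu.
    destruct (Hp u Hu) as [Hu0 [Hder [_ Hge]]]. split; [exact Hder|].
    specialize (Hge w Hw). fold A in Hge.
    assert (Hgw := Hb y t0 M Hy Ht0 HM u ltac:(lra)). fold A Z in Hgw.
    assert (a v w * (g * Z * (u - t0) ^ k * exp (- A * (u - t0))) <= a v w * (M - y w u))
      by (apply Rmult_le_compat_l; [apply a_nonneg|]; assumption).
    replace (g' * Z * (INR (S k) * (u - t0) ^ k - A * (u - t0) ^ S k) * exp (- A * (u - t0))
             - A * (M - y v u - g' * Z * (u - t0) ^ S k * exp (- A * (u - t0))))
      with ((g' * INR (S k)) * Z * (u - t0) ^ k * exp (- A * (u - t0)) - A * (M - y v u))
      by ring.
    rewrite Hg'. lra.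
Qed.

Lemma gap_lower_bound_of_reach u v : reach a m u v ->
  exists g k, 0 < g /\ gap_lower_bound u v g k.
Proof.
  induction 1 as [u v Hu Hv Hvu|u w v Huw IH Hv Hvw].
  - exists (1 * a v u / (2 * INR 1)), 1%nat. split; [simpl; lra|].
    apply gap_lower_bound_edge; [apply gap_lower_bound_refl| |]; assumption.
  - destruct IH as [g [k [Hg Hb]]].
    exists (g * a v w / (2 * INR (S k))), (S k). split.
    + assert (0 < INR (S k)) by (apply lt_0_INR; lia).
      apply Rdiv_lt_0_compat; nra.
    + apply gap_lower_bound_edge; [exact Hb| |exact Hv].
      destruct Huw; assumption.
Qed.

Hypothesis m_pos : (0 < m)%nat.

Definition unit_time_gap (v : nat) (rho : R) : Prop :=
  forall y t0 M, approx_flow y -> 0 <= t0 -> (forall i, (i < m)%nat -> y i t0 <= M) ->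
  rho * (M - y O t0) <= M - y v (t0 + 1).

Lemma unit_time_gap_of_lower_bound v g k :
  gap_lower_bound O v g k -> unit_time_gap v (g * exp (- rate_bound)).
Proof.
  intros Hb y t0 M Hy Ht0 HM.
  specialize (Hb y t0 M Hy Ht0 HM (t0 + 1) ltac:(lra)).
  replace (t0 + 1 - t0) with 1 in Hb by ring.
  rewrite pow1, !Rmult_1_r in Hb. lra.
Qed.

Lemma unit_time_gap_weaken v rho rho' :
  unit_time_gap v rho -> 0 < rho' <= rho -> unit_time_gap v rho'.
Proof.
  intros Hgap Hr y t0 M Hy Ht0 HM. specialize (Hgap y t0 M Hy Ht0 HM).
  assert (0 <= M - y O t0) by (specialize (HM O m_pos); lra).
  assert (rho' * (M - y O t0) <= rho * (M - y O t0)) by (apply Rmult_le_compat_r; lra).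
  lra.
Qed.

Lemma unit_time_gap_uniform : strongly_connected a m ->
  exists rho, 0 < rho <= 1 /\ forall v, (v < m)%nat -> unit_time_gap v rho.
Proof.
  intros Hsc. apply common_positive_rate; [exact unit_time_gap_weaken|].
  intros v Hv.
  assert (Hb : exists g k, 0 < g /\ gap_lower_bound O v g k).
  { destruct (Nat.eq_dec v O) as [->|Hne].
    - exists 1, 0%nat. split; [lra|]. apply gap_lower_bound_refl; assumption.
    - apply gap_lower_bound_of_reach. apply Hsc; auto. }
  destruct Hb as [g [k [Hg Hb]]].
  exists (g * exp (- rate_bound)). split.
  - apply Rmult_lt_0_compat; [exact Hg|apply exp_pos].
  - apply unit_time_gap_of_lower_bound with k. exact Hb.
Qed.

Definition spread (x : nat -> R -> R) (t : R) : R :=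
  max_upto m (fun k => x k t) - min_upto m (fun k => x k t).

Lemma spread_nonincreasing x t0 t : approx_flow x -> 0 <= t0 -> t0 <= t ->
  spread x t <= spread x t0.
Proof.
  intros Hx Ht0 Ht. unfold spread.
  set (M0 := max_upto m (fun k => x k t0)). set (m0 := min_upto m (fun k => x k t0)).
  assert (Hup := approx_flow_upper_invariant x t0 M0 Hx Ht0
                   (fun i Hi => le_max_upto m (fun k => x k t0) i Hi)).
  assert (Hlow := approx_flow_upper_invariant (fun k t => - x k t) t0 (- m0)
                    (approx_flow_opp x Hx) Ht0
                    (fun i Hi => Ropp_le_contravar _ _ (min_upto_le m (fun k => x k t0) i Hi))).
  assert (max_upto m (fun k => x k t) <= M0)
    by (apply max_upto_le; [exact m_pos|intros; apply Hup; assumption]).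
  assert (max_upto m (fun k => - x k t) <= - m0)
    by (apply max_upto_le; [exact m_pos|intros k Hk; apply (Hlow k t Hk Ht)]).
  unfold min_upto. lra.
Qed.

Lemma max_after_unit_time y t0 M rho : approx_flow y -> 0 <= t0 ->
  (forall i, (i < m)%nat -> y i t0 <= M) -> (forall v, (v < m)%nat -> unit_time_gap v rho) ->
  max_upto m (fun k => y k (t0 + 1)) <= M - rho * (M - y O t0).
Proof.
  intros Hy Ht0 HM Hgap. apply max_upto_le; [exact m_pos|].
  intros v Hv. specialize (Hgap v Hv y t0 M Hy Ht0 HM). lra.
Qed.

(* Applying [max_after_unit_time] to [x] and to [- x] pinches both extremes
   towards the same value [x 0 t0]. *)
Lemma spread_contraction x t0 rho : approx_flow x -> 0 <= t0 ->
  (forall v, (v < m)%nat -> unit_time_gap v rho) ->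
  spread x (t0 + 1) <= (1 - rho) * spread x t0.
Proof.
  intros Hx Ht0 Hgap. unfold spread.
  set (M0 := max_upto m (fun k => x k t0)). set (m0 := min_upto m (fun k => x k t0)).
  assert (Hup := max_after_unit_time x t0 M0 rho Hx Ht0
                   (fun i Hi => le_max_upto m (fun k => x k t0) i Hi) Hgap).
  assert (Hlow := max_after_unit_time (fun k t => - x k t) t0 (- m0) rho
                    (approx_flow_opp x Hx) Ht0
                    (fun i Hi => Ropp_le_contravar _ _ (min_upto_le m (fun k => x k t0) i Hi))
                    Hgap).
  unfold min_upto in *. fold M0 in Hup. simpl in Hlow. lra.
Qed.

Lemma spread_geometric x rho : approx_flow x -> 0 <= rho <= 1 ->
  (forall v, (v < m)%nat -> unit_time_gap v rho) ->
  forall n, spread x (INR n) <= (1 - rho) ^ n * spread x 0.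
Proof.
  intros Hx Hrho Hgap. induction n as [|n IH]; [simpl; lra|].
  rewrite S_INR. simpl pow.
  assert (Hc := spread_contraction x (INR n) rho Hx (pos_INR n) Hgap).
  assert ((1 - rho) * spread x (INR n) <= (1 - rho) * ((1 - rho) ^ n * spread x 0))
    by (apply Rmult_le_compat_l; lra).
  lra.
Qed.

Lemma approx_flow_consensus x : strongly_connected a m -> approx_flow x -> consensus m x.
Proof.
  intros Hsc Hx i j Hi Hj eps Heps.
  destruct unit_time_gap_uniform as [rho [Hrho Hgap]]; [exact Hsc|].
  assert (HD0 : 0 <= spread x 0).
  { unfold spread. pose proof (le_max_upto m (fun k => x k 0) O m_pos).
    pose proof (min_upto_le m (fun k => x k 0) O m_pos). lra. }
  destruct (pow_lt_1_zero (1 - rho) ltac:(rewrite Rabs_right; lra) (eps / (spread x 0 + 1))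
              ltac:(apply Rdiv_lt_0_compat; lra)) as [N HN].
  exists (INR N). intros t Ht.
  assert (HN0 := HN N (le_n N)).
  rewrite Rabs_right in HN0 by (apply Rle_ge, pow_le; lra).
  assert (Hsmall : (1 - rho) ^ N * spread x 0 < eps).
  { apply Rmult_lt_compat_r with (r := spread x 0 + 1) in HN0; [|lra].
    replace (eps / (spread x 0 + 1) * (spread x 0 + 1)) with eps in HN0 by (field; lra).
    assert (0 <= (1 - rho) ^ N) by (apply pow_le; lra). nra. }
  pose proof (spread_geometric x rho Hx ltac:(lra) Hgap N).
  pose proof (spread_nonincreasing x (INR N) t Hx (pos_INR N) ltac:(lra)).
  pose proof (abs_sub_le_max_min m (fun k => x k t) i j Hi Hj).
  unfold spread in *. lra.
Qed.

End ApproximateFlow.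

Lemma sign_constant_of_no_zero (g : R -> R) s u : s < u ->
  (forall z, s <= z <= u -> continuity_pt g z) ->
  (forall z, s <= z <= u -> g z <> 0) ->
  (0 < g s /\ 0 < g u) \/ (g s < 0 /\ g u < 0).
Proof.
  intros Hsu Hc Hnz.
  assert (Hs : g s <> 0) by (apply Hnz; lra). assert (Hu : g u <> 0) by (apply Hnz; lra).
  destruct (Rlt_dec 0 (g s)) as [Hps|Hps]; destruct (Rlt_dec 0 (g u)) as [Hpu|Hpu];
    [left; split; assumption| | |right; split; lra]; exfalso.
  - destruct (IVT_interv (fun z => - g z) s u) as [z [Hz Hz0]].
    + intros z Hz. apply (continuity_pt_opp g), Hc, Hz.
    + exact Hsu.
    + lra.
    + lra.
    + apply (Hnz z Hz). lra.
  - destruct (IVT_interv g s u) as [z [Hz Hz0]].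
    + exact Hc.
    + exact Hsu.
    + lra.
    + lra.
    + exact (Hnz z Hz Hz0).
Qed.

Lemma near_rate_of_cond2 (g : R -> R) s u : s < u ->
  (forall z, s <= z <= u -> continuity_pt g z) ->
  (forall z, s <= z <= u ->
     Rabs (g s) / (1 + 1 / 2) <= Rabs (g z) <= Rabs (g s) / (1 - 1 / 2)) ->
  near_rate (g s) (g u).
Proof.
  intros Hsu Hc Hbd.
  assert (Hbd' : forall z, s <= z <= u -> 2 / 3 * Rabs (g s) <= Rabs (g z) <= 2 * Rabs (g s)).
  { intros z Hz. specialize (Hbd z Hz).
    replace (Rabs (g s) / (1 + 1 / 2)) with (2 / 3 * Rabs (g s)) in Hbd by field.
    replace (Rabs (g s) / (1 - 1 / 2)) with (2 * Rabs (g s)) in Hbd by field. exact Hbd. }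
  destruct (Req_dec (g s) 0) as [Hs0|Hs0].
  - assert (Hu := Hbd' u ltac:(lra)). rewrite Hs0, Rabs_R0 in Hu.
    assert (Hu0 : g u = 0) by (apply Rabs_eq_0; pose proof (Rabs_pos (g u)); lra).
    unfold near_rate. rewrite Hs0, Hu0, Rminus_diag, Rabs_R0. lra.
  - assert (Hnz : forall z, s <= z <= u -> g z <> 0).
    { intros z Hz Hgz. specialize (Hbd' z Hz). rewrite Hgz, Rabs_R0 in Hbd'.
      pose proof (Rabs_pos_lt (g s) Hs0). lra. }
    assert (Hu := Hbd' u ltac:(lra)). unfold near_rate.
    destruct (sign_constant_of_no_zero g s u Hsu Hc Hnz) as [[Hps Hpu]|[Hns Hnu]].
    + rewrite (Rabs_right (g s)), (Rabs_right (g u)) in * by lra. apply Rabs_le. lra.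
    + rewrite (Rabs_left (g s)), (Rabs_left (g u)) in * by lra. apply Rabs_le. lra.
Qed.

Lemma trigger_time_nonneg a m x c rule tt i :
  triggers_generated a m x c rule tt -> (i < m)%nat ->
  forall k s, tt i k = Some s -> 0 <= s.
Proof.
  intros Htg Hi. destruct (Htg i Hi) as [H0 [Hnone Hnext]].
  induction k as [|k IH]; intros s Hs.
  - rewrite H0 in Hs. injection Hs as <-. lra.
  - destruct (tt i k) as [s0|] eqn:E.
    + assert (Hn := Hnext k s0 E). rewrite Hs in Hn. destruct Hn as [Hn _].
      specialize (IH s0 eq_refl). lra.
    + rewrite (Hnone k E) in Hs. discriminate.
Qed.

Lemma nat_last_true (P : nat -> Prop) : P O -> forall K, ~ P K -> exists k, P k /\ ~ P (S k).
Proof.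
  intros H0 K. induction K as [|K IH]; intros HK; [contradiction|].
  destruct (classic (P K)); [exists K; split; assumption|apply IH; assumption].
Qed.

Lemma last_trigger_before a m x c rule tt j t :
  triggers_generated a m x c rule tt -> non_zeno m tt -> (j < m)%nat -> 0 < t ->
  exists k s, tt j k = Some s /\ 0 <= s < t /\
    forall s', tt j (S k) = Some s' -> t <= s'.
Proof.
  intros Htg Hnz Hj Ht. destruct (Htg j Hj) as [H0 _].
  destruct (Hnz j t Hj) as [K HK].
  destruct (nat_last_true (fun k => exists s, tt j k = Some s /\ s < t))
    with (K := K) as [k [[s [Hs Hst]] Hlast]].
  - exists 0. split; assumption.
  - intros [s [Hs Hst]]. destruct HK as [HK|[s' [HK Hlt]]]; rewrite HK in Hs.
    + discriminate.
    + injection Hs as ->. lra.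
  - exists k, s. split; [exact Hs|]. split.
    + split; [apply (trigger_time_nonneg a m x c rule tt j Htg Hj k s Hs)|exact Hst].
    + intros s' Hs'. apply Rnot_lt_le. intros Hlt. apply Hlast. exists s'. split; assumption.
Qed.

Lemma approx_flow_of_triggered a m x tt rule :
  triggers_generated a m x (1 / 2) rule tt -> non_zeno m tt -> solves_S a m x tt ->
  approx_flow a m x.
Proof.
  intros Htg Hnz [Hc Hd]. split; [exact Hc|].
  intros j t Hj Ht.
  destruct (last_trigger_before a m x (1 / 2) rule tt j t Htg Hnz Hj Ht)
    as [k [s [Hs [Hst Hlast]]]].
  exists s, (q a m x j s). split; [exact Hst|]. intros u Hu.
  assert (Hnext := proj2 (proj2 (Htg j Hj)) k s Hs).
  assert (Hseg : match tt j (S k) with Some s' => u < s' | None => True end /\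
    (forall z, s <= z <= u ->
       if rule j then cond1 a m x (1 / 2) j s z else cond2 a m x (1 / 2) j s z)).
  { destruct (tt j (S k)) as [s'|] eqn:E.
    - assert (t <= s') by (apply Hlast; reflexivity).
      destruct Hnext as [_ [Hcond _]]. split; [lra|]. intros z Hz. apply Hcond. lra.
    - split; [exact I|]. intros z Hz. apply Hnext. lra. }
  destruct Hseg as [Hbefore Hcond]. split.
  - apply (Hd j k s u Hj Hs); [lra|exact Hbefore].
  - rewrite <- q_eq_drive by exact Hj.
    destruct (rule j).
    + specialize (Hcond u ltac:(lra)). unfold cond1 in Hcond. unfold near_rate. lra.
    + apply (near_rate_of_cond2 (q a m x j)); [lra| |exact Hcond].
      intros z Hz. apply continuity_pt_q; [exact Hj|].
      intros i Hi. apply Hc; [exact Hi|lra].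
Qed.

Theorem corollary2 (m : nat) (a : nat -> nat -> R)
  (Hnonneg : forall i j, (i < m)%nat -> (j < m)%nat -> 0 <= a i j)
  (Hdiag : forall i, (i < m)%nat -> a i i = 0)
  (Hsc : strongly_connected a m) :
  exists c, 0 < c < 1 /\
    forall (x : nat -> R -> R) (tt : nat -> nat -> option R) (rule : nat -> bool),
      triggers_generated a m x c rule tt ->
      non_zeno m tt ->
      solves_S a m x tt ->
      consensus m x.
Proof.
  exists (1 / 2). split; [lra|].
  intros x tt rule Htg Hnz Hsol i j Hi Hj.
  apply (approx_flow_consensus a m Hnonneg ltac:(lia)); [exact Hsc| |exact Hi|exact Hj].
  exact (approx_flow_of_triggered a m x tt rule Htg Hnz Hsol).
Qed.
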